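(* Let $\Omega>0$ denote the maximum absolute value of the stored quantities, let $C$ be the column index of a Boolean scalar (stored as $X[1,C]\in\{0,1\}$) in $X\in\mathbb{R}^{K\times d}$, and let $D,E$ be column indices of two columns all of whose entries are Boolean. Then there exists a single transformer layer that simulates the repeat-AND operation $X[i,D]\leftarrow X[1,C]\wedge X[i,D]\wedge\neg X[i,E]$ for all $i\in\{2,3,\dots,K\}$.
   Context: Conventions: rows/columns indexed from $1$; $X[i,j]$ is the $(i,j)$ entry. $\wedge,\neg$ are logical AND and NOT on $\{0,1\}$. $\phi(x)=\max\{x,0\}$ entrywise. Hardmax $\sigma$: row $i$ of $\sigma(\Phi)$ is $\frac{1}{|S_i|}\sum_{k\in S_i}e_k$, $S_i=\{k:\Phi_{ik}=\max_j\Phi_{ij}\}$. For a weighted hypergraph with incident matrix $A\in\mathbb{R}^{n_v\times n_e}$ ($A_{ij}=w(e_j)$ if vertex $v_i\in e_j$, else $0$) and $K\ge\max\{n_v,n_e\}+1$, the padded incident matrix $\widetilde A\in\mathbb{R}^{K\times K}$ has $\widetilde A_{i+1,j+1}=A_{ij}$, zeros elsewhere. A transformer layer on $X\in\mathbb{R}^{K\times d}$ is $f(X,\widetilde A)=f_{\mathrm{mlp}}(f_{\mathrm{attn}}(X,\widetilde A))$, $f_{\mathrm{attn}}(X,\widetilde A)=\sum_{i\in M_A}\psi^{(i)}(X,\widetilde A)+\sum_{i\in M_{A^\top}}\psi^{(i)}(X,\widetilde A^\top)+\sum_{i\in M}\psi^{(i)}(X,I_K)+X$, $\psi(X,B)=B\,\sigma(XW_QW_K^\top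 X^\top)XW_V$ ($W_Q,W_K\in\mathbb{R}^{d\times2}$, $W_V\in\mathbb{R}^{d\times d}$), $f_{\mathrm{mlp}}(X)=Z^{(4)}W^{(4)}+X$, $Z^{(1)}=X$, $Z^{(j+1)}=\phi(Z^{(j)}W^{(j)})$ ($j=1,2,3$). Storage convention: scalars in the top row of a column (rest $0$), arrays of length $K-1$ in rows $2,\dots,K$ (top $0$); designated columns $B_{\mathrm{global}}$ (top $1$, rest $0$), $B_{\mathrm{local}}$ (top $0$, rest $1$), and scratchpad columns. ''Simulating an operation'' means the layer's weights can be chosen so that applying it to $X$ performs the stated update. *)

From HB Require Import structures.
From mathcomp Require Import all_boot all_order all_algebra.
From mathcomp Require Import reals.
Set Implicit Arguments. Unset Strict Implicit. Unset Printing Implicit Defensive.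
Import Order.TTheory GRing.Theory Num.Theory.
Local Open Scope ring_scope.

Section Transformer.
Variable R : realType.

Definition relu m n (M : 'M[R]_(m, n)) : 'M[R]_(m, n) :=
  map_mx (fun x => Num.max x 0) M.

Definition rowmax n (Phi : 'M[R]_n) (i : 'I_n) : R :=
  \big[Num.max/Phi i i]_(j < n) Phi i j.

Definition argmax_set n (Phi : 'M[R]_n) (i : 'I_n) : {set 'I_n} :=
  [set k | Phi i k == rowmax Phi i].

Definition hardmax n (Phi : 'M[R]_n) : 'M[R]_n :=
  \matrix_(i < n, k < n)
    (if k \in argmax_set Phi i then (#|argmax_set Phi i|%:R)^-1 else 0).

Record head (d : nat) := Head {
  WQ : 'M[R]_(d, 2); WK : 'M[R]_(d, 2); WV : 'M[R]_d }.

Definition psi K d (h : head d) (X : 'M[R]_(K, d)) (B : 'M[R]_K) : 'M[R]_(K, d) :=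
  B *m hardmax (X *m WQ h *m (WK h)^T *m X^T) *m X *m WV h.

(* A transformer layer: three families of heads (M_A, M_{A^T}, M) and a
   3-hidden-layer ReLU MLP with residual connection. *)
Record layer (d : nat) := Layer {
  headsA : seq (head d);
  headsAT : seq (head d);
  headsI : seq (head d);
  h1 : nat; h2 : nat; h3 : nat;
  W1 : 'M[R]_(d, h1); W2 : 'M[R]_(h1, h2);
  W3 : 'M[R]_(h2, h3); W4 : 'M[R]_(h3, d) }.

Definition f_attn K d (L : layer d) (X : 'M[R]_(K, d)) (At : 'M[R]_K) : 'M[R]_(K, d) :=
  \sum_(h <- headsA L) psi h X At + \sum_(h <- headsAT L) psi h X At^T
  + \sum_(h <- headsI L) psi h X 1%:M + X.

Definition f_mlp K d (L : layer d) (X : 'M[R]_(K, d)) : 'M[R]_(K, d) :=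
  let Z2 := relu (X *m W1 L) in
  let Z3 := relu (Z2 *m W2 L) in
  let Z4 := relu (Z3 *m W3 L) in
  Z4 *m W4 L + X.

Definition apply_layer K d (L : layer d) (X : 'M[R]_(K, d)) (At : 'M[R]_K) :=
  f_mlp L (f_attn L X At).

Record hypergraph := Hypergraph {
  nv : nat; ne : nat;
  mem_edge : 'I_nv -> 'I_ne -> bool;
  weight : 'I_ne -> R }.

Definition incidence (H : hypergraph) : 'M[R]_(nv H, ne H) :=
  \matrix_(i, j) (if mem_edge i j then weight j else 0).

(* Padded incidence matrix: A~[i+1, j+1] = A[i, j] (1-indexed), zeros elsewhere.
   With 0-indexed ordinals: A~ i j = A (i-1) (j-1) if i, j >= 1 and in range. *)
Definition padded K (H : hypergraph) : 'M[R]_K :=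
  \matrix_(i < K, j < K)
    if (0 < (i : nat))%N && (0 < (j : nat))%N then
      match insub (i : nat).-1 : option 'I_(nv H),
            insub (j : nat).-1 : option 'I_(ne H) with
      | Some i', Some j' => incidence H i' j'
      | _, _ => 0
      end
    else 0.

End Transformer.

(* Booleans stored as reals in {0,1}; top row = row 1 of the paper = index 0. *)
Definition is_bool {R : realType} (x : R) : Prop := x = 0 \/ x = 1.
Definition btrue {R : realType} (x : R) : bool := x == 1.
Definition of_bool {R : realType} (b : bool) : R := if b then 1 else 0.
Definition top {K : nat} (i : 'I_K) : bool := (i : nat) == 0%N.

From Pilot Require Import Defs.
From HB Require Import structures.
From mathcomp Require Import all_boot all_order all_algebra.
From mathcomp Require Import reals.
From mathcomp Require Import ring lra.
Import Order.TTheory GRing.Theory Num.Theory.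

(* An attention head with zero query and key weights scores all positions
   equally, so hardmax averages the rows; with value matrix K e_C e_S^T it
   writes the scalar c = X[1,C] into the scratch column S of every row.  The
   MLP then adds relu(c + x - e - l - 2g) - relu(x - g) to column D, where
   x, e, g, l are the row's entries in D, E, B_global, B_local, and subtracts
   relu(c) from S.  In a row i >= 2 (g = 0, l = 1) this replaces x by
   c && x && ~~ e; in the top row (g = 1, l = 0) both ReLUs vanish; and the
   scratch column returns to 0. *)

Set Implicit Arguments.
Unset Strict Implicit.
Unset Printing Implicit Defensive.

Local Open Scope ring_scope.

Section AndNotLayer.
Variable R : realType.

Lemma mul_mx_delta m n p (A : 'M[R]_(m, n)) (k : 'I_n) (l : 'I_p) :
  A *m delta_mx k l = \matrix_(i, j) (A i k * (j == l)%:R).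
Proof.
apply/matrixP => i j; rewrite !mxE (bigD1 k) //= mxE eqxx big1 ?addr0 //.
by move=> k' /negbTE k'k; rewrite mxE k'k mulr0.
Qed.

Lemma hardmax0 n : hardmax (0 : 'M[R]_n) = const_mx n%:R^-1.
Proof.
apply/matrixP => i k; rewrite !mxE.
have -> : argmax_set (0 : 'M[R]_n) i = setT.
  have rowmax0 : rowmax (0 : 'M[R]_n) i = 0.
    by rewrite /rowmax; elim/big_rec: _ => [|l x _ ->]; rewrite mxE ?maxxx.
  by apply/setP => j; rewrite !inE rowmax0 mxE eqxx.
by rewrite in_setT cardsT card_ord.
Qed.

Lemma relu_idem m n (M : 'M[R]_(m, n)) : relu (relu M) = relu M.
Proof. by apply/matrixP => i j; rewrite !mxE -maxA maxxx. Qed.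

Lemma f_mlp_id_hidden (K d h : nat) (hA hAT hI : seq (Defs.head R d))
    (W_in : 'M[R]_(d, h)) (W_out : 'M[R]_(h, d)) (Y : 'M[R]_(K, d)) :
  f_mlp (@Layer R d hA hAT hI h h h W_in 1%:M 1%:M W_out) Y
  = relu (Y *m W_in) *m W_out + Y.
Proof. by rewrite /f_mlp /= !mulmx1 !relu_idem. Qed.

Definition broadcast_head (K d : nat) (C S : 'I_d) : Defs.head R d :=
  Head 0 0 (K%:R *: delta_mx C S).

Lemma psi_broadcast_head (K d : nat) (C S : 'I_d) (X : 'M[R]_(K, d)) :
  psi (broadcast_head K C S) X 1%:M = \matrix_(i, j) ((j == S)%:R * \sum_l X l C).
Proof.
apply/matrixP => i j.
have K_neq0 : K%:R != 0 :> R by rewrite pnatr_eq0 -lt0n (leq_ltn_trans _ (ltn_ord i)).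
rewrite /psi /= mulmx0 !mul0mx mul1mx hardmax0 -scalemxAr mul_mx_delta !mxE.
rewrite [in LHS](eq_bigr (fun l => K%:R^-1 * X l C)) => [|l _]; last by rewrite mxE.
by rewrite -mulr_sumr !mulrA mulfV // mul1r mulrC.
Qed.

Section AndNot.
Variables (K d : nat) (C D E G L S : 'I_d).

Definition and_not_in : 'M[R]_(d, 3) :=
  delta_mx S 0 + delta_mx D 0 - delta_mx E 0 - delta_mx L 0 - 2 *: delta_mx G 0
  + delta_mx D 1 - delta_mx G 1 + delta_mx S 2.

Definition and_not_out : 'M[R]_(3, d) := delta_mx 0 D - delta_mx 1 D - delta_mx 2 S.

Lemma and_not_updateE (Y : 'M[R]_(K, d)) i j :
  (relu (Y *m and_not_in) *m and_not_out) i j =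
  (j == D)%:R * (Num.max (Y i S + Y i D - Y i E - Y i L - 2 * Y i G) 0
                 - Num.max (Y i D - Y i G) 0)
  - (j == S)%:R * Num.max (Y i S) 0.
Proof.
rewrite /and_not_in /and_not_out !(mulmxDr, mulmxN) -!scalemxAr !mul_mx_delta !mxE /=.
rewrite !(mulr1, mulr0, addr0, add0r, subr0, sub0r, oppr0).
ring.
Qed.

Definition and_not_layer : layer R d :=
  Layer [::] [::] [:: broadcast_head K C S] and_not_in 1%:M 1%:M and_not_out.

Lemma f_attn_and_not_layer (X : 'M[R]_(K, d)) (A : 'M[R]_K) :
  f_attn and_not_layer X A = X + \matrix_(i, j) ((j == S)%:R * \sum_l X l C).
Proof. by rewrite /f_attn /= !big_nil big_seq1 psi_broadcast_head !add0r addrC. Qed.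

Lemma f_mlp_and_not_layer (Y : 'M[R]_(K, d)) :
  f_mlp and_not_layer Y = \matrix_(i, j)
    (Y i j + (j == D)%:R * (Num.max (Y i S + Y i D - Y i E - Y i L - 2 * Y i G) 0
                            - Num.max (Y i D - Y i G) 0)
     - (j == S)%:R * Num.max (Y i S) 0).
Proof.
rewrite f_mlp_id_hidden; apply/matrixP => i j.
by rewrite [LHS]mxE and_not_updateE mxE addrC addrA.
Qed.

End AndNot.

Lemma btrueK (x : R) : is_bool x -> of_bool (btrue x) = x.
Proof. by rewrite /btrue /of_bool; case=> ->; rewrite ?eqxx // eq_sym oner_eq0. Qed.

Lemma of_boolK : cancel (@of_bool R) btrue.
Proof. by case; rewrite /btrue /of_bool ?eqxx // eq_sym oner_eq0. Qed.

Lemma relu_and_not (t c x e : bool) :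
  of_bool x
  + (Num.max (of_bool c + of_bool x - of_bool e - of_bool (~~ t) - 2 * of_bool t) 0
     - Num.max (of_bool x - of_bool t) 0)
  = if ~~ t then of_bool (c && x && ~~ e) else of_bool x :> R.
Proof.
by case: t c x e => [] [] [] []; rewrite /of_bool /= !maxEle; do 2 case: leP => ?; lra.
Qed.

End AndNotLayer.

Theorem lemmaC9 (R : realType) (K d : nat) (hK : (0 < K)%N) (Omega : R)
    (C D E G L S : 'I_d) :
  0 < Omega ->
  (* B_global, B_local and a scratchpad column are distinct from each other
     and from the columns C, D, E *)
  uniq [:: G; L; S] -> G \notin [:: C; D; E] -> L \notin [:: C; D; E] ->
  S \notin [:: C; D; E] ->
  exists Lay : layer R d,
    forall (H : hypergraph R) (X : 'M[R]_(K, d)),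
      (K >= maxn (nv H) (ne H) + 1)%N ->
      (forall i j, `|X i j| <= Omega) ->
      (* storage conventions *)
      (forall i, X i G = if top i then 1 else 0) ->
      (forall i, X i L = if top i then 0 else 1) ->
      (forall i, X i S = 0) ->
      (* C stores a Boolean scalar *)
      is_bool (X (Ordinal hK) C) -> (forall i, ~~ top i -> X i C = 0) ->
      (* D, E are columns of Booleans *)
      (forall i, is_bool (X i D)) -> (forall i, is_bool (X i E)) ->
      apply_layer Lay X (padded K H) =
        \matrix_(i < K, j < d)
          (if (j == D) && ~~ top i then
             of_bool (btrue (X (Ordinal hK) C) && btrue (X i D) && ~~ btrue (X i E))
           else X i j).
Proof.
move=> _ /and3P[]; rewrite !inE !negb_or => /andP[_ GS] LS _ _ _ /and3P[_ SD SE].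
exists (and_not_layer R K C D E G L S) => H X _ _ XG XL XS XCb XC0 XDb XEb.
have sumC : \sum_l X l C = X (Ordinal hK) C.
  by rewrite (bigD1 (Ordinal hK)) //= big1 ?addr0 // => l l_neq0; apply: XC0.
have XL' k : X k L = of_bool (~~ top k) by rewrite XL; case: (top k).
rewrite /apply_layer f_attn_and_not_layer f_mlp_and_not_layer.
apply/matrixP => i j; rewrite !mxE sumC.
rewrite (eq_sym D S) (negbTE SD) (eq_sym E S) (negbTE SE) (negbTE GS) (negbTE LS).
rewrite eqxx !mul0r !addr0 !mul1r XS XG XL' add0r.
have [->|_] := eqVneq j D.
  rewrite (eq_sym D S) (negbTE SD) !mul0r addr0 mul1r subr0.
  rewrite -(btrueK (XDb i)) -(btrueK (XEb i)) -(btrueK XCb) !of_boolK /=.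
  exact: relu_and_not.
have [->|_] := eqVneq j S.
  have c_ge0 : 0 <= X (Ordinal hK) C by case: XCb => ->.
  by rewrite (max_l c_ge0) !mul1r mul0r addr0 addrK.
by rewrite !mul0r !addr0 subr0.
Qed.
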